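(* Suppose $\kappa<\lambda$ are infinite regular cardinals and $d:[\lambda]^2\to\kappa$ is subadditive and unbounded. Then there is a strong $\lambda$-system $S=\langle\lambda\times 1,\mathcal{R}\rangle$ such that $|\mathcal{R}|=\kappa$ and $S$ has no cofinal branch.
   Context: $d:[\lambda]^2\to\kappa$ (written $d(\alpha,\beta)$ for $\alpha<\beta$) is subadditive if for all $\alpha<\beta<\gamma<\lambda$: $d(\alpha,\gamma)\le\max\{d(\alpha,\beta),d(\beta,\gamma)\}$ and $d(\alpha,\beta)\le\max\{d(\alpha,\gamma),d(\beta,\gamma)\}$; it is unbounded if for every unbounded $I\subseteq\lambda$, $d``[I]^2$ is unbounded in $\kappa$. A relation $R$ is tree-like if $a<_R c$ and $b<_R c$ imply $a,b$ are $R$-comparable ($a=b$, $a<_Rb$ or $b<_Ra$). A $\lambda$-system $\langle I\times\nu,\mathcal{R}\rangle$ consists of an unbounded $I\subseteq\lambda$, $0<\nu<\lambda$, levels $S_\alpha=\{\alpha\}\times\nu$ (with $S$ their union), and a set $\mathcal{R}$ of binary transitive tree-like relations on $S$ with $|\mathcal{R}|<\lambda$, such that $(\alpha_0,\beta_0)<_R(\alpha_1,\beta_1)$ implies $\alpha_0<\alpha_1$, and for all $\alpha_0<\alpha_1$ in $I$ some elements of the two levels are related by some $R\in\mathcal{R}$. It is strong if for all $\alpha_0<\alpha_1$ in $I$ and every $\beta_1<\nu$ there are $\beta_0<\nu$, $R\in\mathcal{R}$ with $(\alpha_0,\beta_0)<_R(\alpha_1,\beta_1)$. A branch through $R$ is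 a set of pairwise $R$-comparable elements; it is cofinal if it meets unboundedly many levels. *)

(* Infinite cardinals are modelled as well-ordered types
   that are initial ordinals (von Neumann cardinals); the order is the ordinal order. *)
Set Implicit Arguments.

Definition inj_le (A B : Type) : Prop := exists f : A -> B, forall x y, f x = f y -> x = y.
Definition card_eq (A B : Type) : Prop :=
  exists f : A -> B, (forall x y, f x = f y -> x = y) /\ (forall b, exists a, f a = b).

Definition strict_wellorder (T : Type) (lt : T -> T -> Prop) : Prop :=
  (forall x, ~ lt x x) /\
  (forall x y z, lt x y -> lt y z -> lt x z) /\
  (forall x y, lt x y \/ x = y \/ lt y x) /\
  well_founded lt.

Definition unbounded (T : Type) (lt : T -> T -> Prop) (X : T -> Prop) : Prop :=
  forall x, exists y, X y /\ lt x y.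

Definition infinite_regular_cardinal (T : Type) (lt : T -> T -> Prop) : Prop :=
  strict_wellorder lt /\
  inj_le nat T /\
  (* initial ordinal: every proper initial segment has smaller cardinality *)
  (forall x, ~ inj_le T {y : T | lt y x}) /\
  (* regular: every unbounded subset has full cardinality *)
  (forall X : T -> Prop, unbounded lt X -> inj_le T {x : T | X x}).

Definition leo (T : Type) (lt : T -> T -> Prop) (x y : T) : Prop := lt x y \/ x = y.

(* d(a,c) <= max{x,y} in a linear order, written as (d(a,c) <= x or d(a,c) <= y) *)
Definition le_max (K : Type) (ltK : K -> K -> Prop) (z x y : K) : Prop :=
  leo ltK z x \/ leo ltK z y.

(* d : [L]^2 -> K, written d a b for a < b (values for a >= b are irrelevant) *)
Definition subadditive (L K : Type) (ltL : L -> L -> Prop) (ltK : K -> K -> Prop)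
  (d : L -> L -> K) : Prop :=
  forall a b c, ltL a b -> ltL b c ->
    le_max ltK (d a c) (d a b) (d b c) /\ le_max ltK (d a b) (d a c) (d b c).

Definition unbounded_coloring (L K : Type) (ltL : L -> L -> Prop) (ltK : K -> K -> Prop)
  (d : L -> L -> K) : Prop :=
  forall I : L -> Prop, unbounded ltL I ->
    forall k : K, exists a b, I a /\ I b /\ ltL a b /\ leo ltK k (d a b).

(* lambda-systems.  Nodes are pairs (alpha, beta) : L * L; the level set is
   I x nu where nu : L is viewed as the ordinal {beta | beta < nu}. *)
Definition node_in (L : Type) (ltL : L -> L -> Prop) (I : L -> Prop) (nu : L)
  (p : L * L) : Prop := I (fst p) /\ ltL (snd p) nu.

Definition rel_comparable (X : Type) (R : X -> X -> Prop) (a b : X) : Prop :=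
  a = b \/ R a b \/ R b a.

Definition lambda_system (L : Type) (ltL : L -> L -> Prop) (I : L -> Prop) (nu : L)
  (RR : (L * L -> L * L -> Prop) -> Prop) : Prop :=
  unbounded ltL I /\
  (exists b, ltL b nu) /\                         (* 0 < nu  (nu < lambda since nu : L) *)
  ~ inj_le L {R | RR R} /\
  (forall R, RR R ->
     (forall p q, R p q -> node_in ltL I nu p /\ node_in ltL I nu q) /\
     (forall p q r, R p q -> R q r -> R p r) /\
     (forall a b c, R a c -> R b c -> rel_comparable R a b) /\
     (forall p q, R p q -> ltL (fst p) (fst q))) /\
  (forall a0 a1, I a0 -> I a1 -> ltL a0 a1 ->
     exists b0 b1 R, ltL b0 nu /\ ltL b1 nu /\ RR R /\ R (a0, b0) (a1, b1)).

Definition strong_lambda_system (L : Type) (ltL : L -> L -> Prop) (I : L -> Prop) (nu : L)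
  (RR : (L * L -> L * L -> Prop) -> Prop) : Prop :=
  lambda_system ltL I nu RR /\
  (forall a0 a1 b1, I a0 -> I a1 -> ltL a0 a1 -> ltL b1 nu ->
     exists b0 R, ltL b0 nu /\ RR R /\ R (a0, b0) (a1, b1)).

Definition branch (L : Type) (ltL : L -> L -> Prop) (I : L -> Prop) (nu : L)
  (R : L * L -> L * L -> Prop) (B : L * L -> Prop) : Prop :=
  (forall p, B p -> node_in ltL I nu p) /\
  (forall p q, B p -> B q -> rel_comparable R p q).

Definition cofinal_branch (L : Type) (ltL : L -> L -> Prop) (I : L -> Prop) (nu : L)
  (R : L * L -> L * L -> Prop) (B : L * L -> Prop) : Prop :=
  branch ltL I nu R B /\ unbounded ltL (fun a => exists b, B (a, b)).

Definition has_no_cofinal_branch (L : Type) (ltL : L -> L -> Prop) (I : L -> Prop) (nu : L)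
  (RR : (L * L -> L * L -> Prop) -> Prop) : Prop :=
  forall R, RR R -> forall B, ~ cofinal_branch ltL I nu R B.

Definition is_one (L : Type) (ltL : L -> L -> Prop) (one : L) : Prop :=
  exists z, ltL z one /\ forall b, ltL b one -> b = z.

(* Take nu = 1, so each level is a single node (a, 0), and for every colour i
   in the range of d let R_i relate (a, 0) to (b, 0) when a < b and d(a, b) <= i.  The two
   subadditivity inequalities make R_i transitive and tree-like, and since
   d(a, b) <= i is always witnessed by R_(d(a, b)) the system is strong.  The
   range of d is unbounded in kappa, so by regularity there are exactly kappa
   relations.  A cofinal branch through R_i would be an unbounded set on which d
   is bounded by i, contradicting the unboundedness of d. *)

From Stdlib Require Import Classical ClassicalEpsilon ProofIrrelevance.

Section SchroederBernstein.

Context {A B : Type} (f : A -> B) (g : B -> A).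
Hypotheses (f_inj : forall x y, f x = f y -> x = y)
           (g_inj : forall x y, g x = g y -> x = y).

Fixpoint csb_chain (n : nat) (a : A) : Prop :=
  match n with
  | O => ~ exists b, g b = a
  | S m => exists x, csb_chain m x /\ a = g (f x)
  end.

Definition csb_left (a : A) : Prop := exists n, csb_chain n a.

Lemma csb_not_left_in_range {a : A} : ~ csb_left a -> exists b, g b = a.
Proof.
  intro Ha. apply NNPP; intro H. apply Ha. exists O. exact H.
Qed.

(* The Schroeder-Bernstein bijection: [f] on the points whose [g o f]-ancestry
   starts outside the range of [g], the inverse of [g] elsewhere. *)
Definition csb_map (a : A) : B :=
  match excluded_middle_informative (csb_left a) with
  | left _ => f a
  | right H => proj1_sig (constructive_indefinite_description _ (csb_not_left_in_range H))
  end.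

Lemma csb_map_left {a : A} : csb_left a -> csb_map a = f a.
Proof.
  intro Ha. unfold csb_map.
  destruct (excluded_middle_informative (csb_left a)); [reflexivity | contradiction].
Qed.

Lemma csb_map_right {a : A} : ~ csb_left a -> g (csb_map a) = a.
Proof.
  intro Ha. unfold csb_map.
  destruct (excluded_middle_informative (csb_left a)) as [H | H]; [contradiction |].
  exact (proj2_sig (constructive_indefinite_description _ (csb_not_left_in_range H))).
Qed.

Lemma csb_left_step {x : A} : csb_left x -> csb_left (g (f x)).
Proof.
  intros [n Hn]. exists (S n). exists x. split; [exact Hn | reflexivity].
Qed.

Lemma csb_map_inj (a1 a2 : A) : csb_map a1 = csb_map a2 -> a1 = a2.
Proof.
  assert (mixed : forall x y, csb_left x -> ~ csb_left y -> csb_map x <> csb_map y).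
  { intros x y Hx Hy E. apply Hy.
    rewrite <- (csb_map_right Hy), <- E, (csb_map_left Hx). exact (csb_left_step Hx). }
  intro E.
  destruct (classic (csb_left a1)) as [H1 | H1], (classic (csb_left a2)) as [H2 | H2].
  - apply f_inj. rewrite <- (csb_map_left H1), <- (csb_map_left H2). exact E.
  - exfalso. exact (mixed _ _ H1 H2 E).
  - exfalso. exact (mixed _ _ H2 H1 (eq_sym E)).
  - rewrite <- (csb_map_right H1), <- (csb_map_right H2), E. reflexivity.
Qed.

Lemma csb_map_surj (b : B) : exists a, csb_map a = b.
Proof.
  destruct (classic (csb_left (g b))) as [[[| n] Hn] | Hb].
  - exfalso. apply Hn. exists b. reflexivity.
  - destruct Hn as [x [Hx E]]. apply g_inj in E. subst b.
    exists x. apply csb_map_left. exists n. exact Hx.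
  - exists (g b). apply g_inj. exact (csb_map_right Hb).
Qed.

End SchroederBernstein.

Lemma inj_le_antisym {A B : Type} : inj_le A B -> inj_le B A -> card_eq A B.
Proof.
  intros [f f_inj] [g g_inj]. exists (csb_map f g). split.
  - exact (csb_map_inj f g f_inj).
  - exact (csb_map_surj f g g_inj).
Qed.

Lemma inj_le_card_eq_r {A B C : Type} : card_eq A B -> inj_le C B -> inj_le C A.
Proof.
  intros [c [_ c_surj]] [f f_inj].
  exists (fun x => proj1_sig (constructive_indefinite_description _ (c_surj (f x)))).
  intros x y E. apply f_inj.
  rewrite <- (proj2_sig (constructive_indefinite_description _ (c_surj (f x)))),
          <- (proj2_sig (constructive_indefinite_description _ (c_surj (f y)))), E.
  reflexivity.
Qed.

Lemma card_eq_image {K X : Type} {P : K -> Prop} {F : K -> X} :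
  inj_le K {i | P i} -> (forall i j, P i -> P j -> F i = F j -> i = j) ->
  card_eq K {x | exists i, P i /\ x = F i}.
Proof.
  intros [e e_inj] F_inj. apply inj_le_antisym.
  - assert (HF : forall k, exists i, P i /\ F (proj1_sig (e k)) = F i).
    { intro k. exists (proj1_sig (e k)). split; [exact (proj2_sig (e k)) | reflexivity]. }
    exists (fun k => exist (fun x => exists i, P i /\ x = F i) _ (HF k)).
    intros k1 k2 E. apply e_inj.
    apply (f_equal (@proj1_sig _ _)) in E; simpl in E.
    destruct (e k1) as [i1 H1], (e k2) as [i2 H2]; simpl in E.
    apply subset_eq_compat. exact (F_inj _ _ H1 H2 E).
  - exists (fun x : {x | exists i, P i /\ x = F i} => proj1_sig
      (constructive_indefinite_description (fun i => P i /\ proj1_sig x = F i) (proj2_sig x))).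
    intros [x1 H1] [x2 H2]; simpl.
    destruct (constructive_indefinite_description _ H1) as [i1 [? E1]].
    destruct (constructive_indefinite_description _ H2) as [i2 [? E2]]; simpl.
    intro E. apply subset_eq_compat. congruence.
Qed.

Section InfiniteTypes.

Context {T : Type}.

Definition swap (x y t : T) : T :=
  if excluded_middle_informative (t = x) then y
  else if excluded_middle_informative (t = y) then x else t.

Lemma swap_involutive (x y t : T) : swap x y (swap x y t) = t.
Proof.
  unfold swap.
  destruct (excluded_middle_informative (t = x)) as [E1 | E1];
  [destruct (excluded_middle_informative (y = x)) as [E2 | E2];
   [| destruct (excluded_middle_informative (y = y))] |
   destruct (excluded_middle_informative (t = y)) as [E2 | E2];
   [destruct (excluded_middle_informative (x = x)) |
    destruct (excluded_middle_informative (t = x));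
    [| destruct (excluded_middle_informative (t = y))]]]; congruence.
Qed.

Lemma swap_inj {x y t1 t2 : T} : swap x y t1 = swap x y t2 -> t1 = t2.
Proof.
  intro E. rewrite <- (swap_involutive x y t1), <- (swap_involutive x y t2), E.
  reflexivity.
Qed.

Lemma swap_eq_l {x y t : T} : swap x y t = x -> t = y.
Proof.
  intro E. rewrite <- (swap_involutive x y t), E. unfold swap.
  destruct (excluded_middle_informative (x = x)); congruence.
Qed.

(* Hilbert's hotel: shift the copy of [nat] by one, freeing the point [g 0]. *)
Lemma inj_le_nat_shift :
  inj_le nat T -> exists (s : T -> T) (p : T),
    (forall t1 t2, s t1 = s t2 -> t1 = t2) /\ forall t, s t <> p.
Proof.
  intros [g g_inj].
  set (pred_g := fun t (H : exists n, t = g n) =>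
                   proj1_sig (constructive_indefinite_description _ H)).
  assert (pred_g_spec : forall t H, t = g (pred_g t H))
    by (intros t H; exact (proj2_sig (constructive_indefinite_description _ H))).
  set (s := fun t => match excluded_middle_informative (exists n, t = g n) with
                     | left H => g (S (pred_g t H))
                     | right _ => t end).
  exists s, (g 0). split.
  - intros t1 t2. unfold s.
    destruct (excluded_middle_informative (exists n, t1 = g n)) as [H1 | H1];
    destruct (excluded_middle_informative (exists n, t2 = g n)) as [H2 | H2];
    intro E.
    + apply g_inj in E. injection E as E.
      rewrite (pred_g_spec t1 H1), (pred_g_spec t2 H2), E. reflexivity.
    + exfalso. apply H2. eexists. exact (eq_sym E).
    + exfalso. apply H1. eexists. exact E.
    + exact E.
  - intros t. unfold s.
    destruct (excluded_middle_informative (exists n, t = g n)) as [H | H]; intro E.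
    + apply g_inj in E. discriminate.
    + apply H. exists 0. exact E.
Qed.

Lemma inj_le_remove_point : inj_le nat T -> forall x : T, inj_le T {y : T | y <> x}.
Proof.
  intros Hnat x. destruct (inj_le_nat_shift Hnat) as [s [p [s_inj s_miss]]].
  assert (Hx : forall t, swap x p (s t) <> x)
    by (intros t E; exact (s_miss t (swap_eq_l E))).
  exists (fun t => exist (fun y => y <> x) _ (Hx t)).
  intros t1 t2 E. apply (f_equal (@proj1_sig _ _)) in E.
  exact (s_inj _ _ (swap_inj E)).
Qed.

End InfiniteTypes.

Lemma wf_min {T : Type} {lt : T -> T -> Prop} (P : T -> Prop) (x : T) :
  well_founded lt -> P x -> exists m, P m /\ forall y, lt y m -> ~ P y.
Proof.
  intros wf Px. apply NNPP; intro H. revert Px. induction (wf x) as [x _ IH].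
  intro Px. apply H. exists x. split; [exact Px |]. intros y Hy Py. exact (IH y Hy Py).
Qed.

(* A maximum [x] would turn [T] minus [x], which is as large as [T], into the
   initial segment below [x]. *)
Lemma regular_cardinal_no_max {T : Type} {lt : T -> T -> Prop} :
  infinite_regular_cardinal lt -> forall x, exists y, lt x y.
Proof.
  intros [[_ [_ [tot _]]] [Hnat [init _]]] x. apply NNPP; intro Hmax.
  apply (init x). destruct (inj_le_remove_point Hnat x) as [f f_inj].
  assert (below : forall y, y <> x -> lt y x).
  { intros y Hy. destruct (tot y x) as [H | [H | H]]; [exact H | contradiction |].
    exfalso. apply Hmax. exists y. exact H. }
  exists (fun t => exist (fun y => lt y x) _ (below _ (proj2_sig (f t)))).
  intros t1 t2 E. apply f_inj. apply (f_equal (@proj1_sig _ _)) in E.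
  destruct (f t1), (f t2); simpl in E. apply subset_eq_compat. exact E.
Qed.

Lemma wellorder_least_and_succ {T : Type} {lt : T -> T -> Prop} (t : T) :
  strict_wellorder lt -> (forall x, exists y, lt x y) ->
  exists z one, lt z one /\ forall b, lt b one -> b = z.
Proof.
  intros [_ [_ [tot wf]]] no_max.
  destruct (wf_min (fun _ => True) t wf I) as [z [_ z_least]].
  destruct (no_max z) as [w zw].
  destruct (wf_min (lt z) w wf zw) as [one [z_one one_least]].
  exists z, one. split; [exact z_one |].
  intros b Hb. destruct (tot b z) as [H | [H | H]]; [| exact H |].
  - exfalso. exact (z_least b H I).
  - exfalso. exact (one_least b Hb H).
Qed.

Section StrictOrder.

Context {T : Type} {lt : T -> T -> Prop}.
Hypotheses (lt_irrefl : forall x, ~ lt x x)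
           (lt_trans : forall x y z, lt x y -> lt y z -> lt x z).

Lemma leo_trans {x y z : T} : leo lt x y -> leo lt y z -> leo lt x z.
Proof.
  intros [H1 | <-] [H2 | <-]; unfold leo; eauto.
Qed.

Lemma le_max_bound {z x y i : T} :
  le_max lt z x y -> leo lt x i -> leo lt y i -> leo lt z i.
Proof.
  intros [H | H] Hx Hy; eapply leo_trans; eauto.
Qed.

Lemma leo_ngt {x y : T} : leo lt x y -> ~ lt y x.
Proof.
  intros [H | <-] H'; [exact (lt_irrefl x (lt_trans _ _ _ H H')) | exact (lt_irrefl x H')].
Qed.

End StrictOrder.

Section BoundedColourRelations.

Context {K L : Type} (ltK : K -> K -> Prop) (ltL : L -> L -> Prop).
Variables (d : L -> L -> K) (z : L).
Hypotheses (irrK : forall i, ~ ltK i i)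
           (trK : forall i j k, ltK i j -> ltK j k -> ltK i k)
           (totK : forall i j, ltK i j \/ i = j \/ ltK j i)
           (irrL : forall a, ~ ltL a a)
           (trL : forall a b c, ltL a b -> ltL b c -> ltL a c)
           (totL : forall a b, ltL a b \/ a = b \/ ltL b a)
           (hsub : subadditive ltL ltK d).

Definition bounded_rel (i : K) (p q : L * L) : Prop :=
  snd p = z /\ snd q = z /\ ltL (fst p) (fst q) /\ leo ltK (d (fst p) (fst q)) i.

Definition colour_range (i : K) : Prop := exists a b, ltL a b /\ d a b = i.

Definition bounded_rels (R : L * L -> L * L -> Prop) : Prop :=
  exists i, colour_range i /\ R = bounded_rel i.

Lemma bounded_rel_self {a b : L} : ltL a b -> bounded_rel (d a b) (a, z) (b, z).
Proof.
  intro ab. repeat split; simpl; auto. right; reflexivity.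
Qed.

Lemma bounded_rels_self {a b : L} : ltL a b -> bounded_rels (bounded_rel (d a b)).
Proof.
  intro ab. exists (d a b). split; [exists a, b; auto | reflexivity].
Qed.

Lemma bounded_rel_trans (i : K) (p q r : L * L) :
  bounded_rel i p q -> bounded_rel i q r -> bounded_rel i p r.
Proof.
  intros [Hp [_ [pq Hpq]]] [_ [Hr [qr Hqr]]]. repeat split; auto.
  - eauto.
  - exact (le_max_bound trK (proj1 (hsub _ _ _ pq qr)) Hpq Hqr).
Qed.

Lemma bounded_rel_treelike (i : K) (p q r : L * L) :
  bounded_rel i p r -> bounded_rel i q r -> rel_comparable (bounded_rel i) p q.
Proof.
  destruct p as [a a'], q as [b b'], r as [c c'].
  intros [Ha [Hc [ac Hac]]] [Hb [_ [bc Hbc]]]; simpl in *. subst a' b'.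
  destruct (totL a b) as [ab | [<- | ba]].
  - right; left. repeat split; simpl; auto.
    exact (le_max_bound trK (proj2 (hsub _ _ _ ab bc)) Hac Hbc).
  - left; reflexivity.
  - right; right. repeat split; simpl; auto.
    exact (le_max_bound trK (proj2 (hsub _ _ _ ba ac)) Hbc Hac).
Qed.

Lemma bounded_rel_inj (i j : K) :
  colour_range i -> colour_range j -> bounded_rel i = bounded_rel j -> i = j.
Proof.
  assert (half : forall i j, colour_range j -> bounded_rel i = bounded_rel j -> ~ ltK i j).
  { intros i' j' [a [b [ab <-]]] E. pose proof (bounded_rel_self ab) as H.
    rewrite <- E in H. destruct H as [_ [_ [_ H]]].
    exact (leo_ngt irrK trK H). }
  intros Hi Hj E. destruct (totK i j) as [H | [H | H]]; [| exact H |]; exfalso.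
  - exact (half i j Hj E H).
  - exact (half j i Hi (eq_sym E) H).
Qed.

Section UnboundedColouring.

Hypotheses (no_maxK : forall i, exists j, ltK i j)
           (hunb : unbounded_coloring ltL ltK d).

Lemma colour_range_unbounded :
  (forall a, exists b, ltL a b) -> unbounded ltK colour_range.
Proof.
  intros no_maxL k. destruct (no_maxK k) as [k' kk'].
  assert (Hall : unbounded ltL (fun _ => True))
    by (intro a; destruct (no_maxL a) as [b ab]; exists b; auto).
  destruct (hunb _ Hall k') as [a [b [_ [_ [ab Hab]]]]].
  exists (d a b). split; [exists a, b; auto |].
  destruct Hab as [H | <-]; eauto.
Qed.

Lemma bounded_rels_no_cofinal_branch (one : L) :
  has_no_cofinal_branch ltL (fun _ => True) one bounded_rels.
Proof.
  intros R [i [_ ->]] B [[_ B_comp] B_unb].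
  destruct (no_maxK i) as [k ik].
  destruct (hunb _ B_unb k) as [a [b [[x Bx] [[y By] [ab Hk]]]]].
  destruct (B_comp _ _ Bx By) as [E | [[_ [_ [_ H]]] | [_ [_ [H _]]]]]; simpl in *.
  - injection E as E. subst b. exact (irrL a ab).
  - exact (leo_ngt irrK trK (leo_trans trK Hk H) ik).
  - exact (irrL a (trL _ _ _ ab H)).
Qed.

End UnboundedColouring.

Lemma bounded_rels_card :
  (forall X : K -> Prop, unbounded ltK X -> inj_le K {i | X i}) ->
  unbounded ltK colour_range -> card_eq K {R | bounded_rels R}.
Proof.
  intros regK unb. exact (card_eq_image (regK _ unb) bounded_rel_inj).
Qed.

Lemma bounded_rels_strong_system (one : L) :
  ltL z one -> (forall b, ltL b one -> b = z) -> (forall a, exists b, ltL a b) ->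
  ~ inj_le L {R | bounded_rels R} ->
  strong_lambda_system ltL (fun _ => True) one bounded_rels.
Proof.
  intros z_one below_one no_maxL small.
  assert (edge : forall a0 a1, ltL a0 a1 ->
            exists R, bounded_rels R /\ R (a0, z) (a1, z))
    by (intros a0 a1 a01; exists (bounded_rel (d a0 a1));
        exact (conj (bounded_rels_self a01) (bounded_rel_self a01))).
  split; [split; [| split; [| split; [| split]]] |].
  - intro a. destruct (no_maxL a) as [b ab]. exists b; auto.
  - exists z. exact z_one.
  - exact small.
  - intros R [i [_ ->]]. split; [| split; [| split]].
    + intros p q [Hp [Hq _]]. split; split; auto; congruence.
    + apply bounded_rel_trans.
    + apply bounded_rel_treelike.
    + intros p q [_ [_ [H _]]]. exact H.
  - intros a0 a1 _ _ a01. destruct (edge a0 a1 a01) as [R [HR E]].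
    exists z, z, R. auto.
  - intros a0 a1 b1 _ _ a01 Hb1. rewrite (below_one b1 Hb1).
    destruct (edge a0 a1 a01) as [R [HR E]]. exists z, R. auto.
Qed.

End BoundedColourRelations.

Theorem mainTheorem8 (K L : Type) (ltK : K -> K -> Prop) (ltL : L -> L -> Prop)
  (hK : infinite_regular_cardinal ltK) (hL : infinite_regular_cardinal ltL)
  (hKL : inj_le K L /\ ~ inj_le L K)
  (d : L -> L -> K)
  (hsub : subadditive ltL ltK d) (hunb : unbounded_coloring ltL ltK d) :
  exists (one : L) (RR : (L * L -> L * L -> Prop) -> Prop),
    is_one ltL one /\
    strong_lambda_system ltL (fun _ => True) one RR /\
    card_eq K {R | RR R} /\
    has_no_cofinal_branch ltL (fun _ => True) one RR.
Proof.
  pose proof (regular_cardinal_no_max hK) as no_maxK.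
  pose proof (regular_cardinal_no_max hL) as no_maxL.
  destruct hK as [[irrK [trK [totK _]]] [_ [_ regK]]].
  destruct hL as [wfL [[g _] _]]. pose proof wfL as [irrL [trL [totL _]]].
  destruct hKL as [_ L_not_le_K].
  destruct (wellorder_least_and_succ (g 0) wfL no_maxL) as [z [one [z_one below_one]]].
  set (RR := bounded_rels ltK ltL d z).
  assert (card : card_eq K {R | RR R}).
  { apply (bounded_rels_card ltK ltL d z irrK trK totK regK).
    exact (colour_range_unbounded ltK ltL d trK no_maxK hunb no_maxL). }
  exists one, RR. split; [| split; [| split]].
  - exists z. exact (conj z_one below_one).
  - apply (bounded_rels_strong_system ltK ltL d z trK trL totL hsub one z_one below_one no_maxL).
    intro H. exact (L_not_le_K (inj_le_card_eq_r card H)).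
  - exact card.
  - exact (bounded_rels_no_cofinal_branch ltK ltL d z irrK trK irrL trL no_maxK hunb one).
Qed.
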